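(* There exists $n_0$ such that the following holds for all $n\ge n_0$. Let $T\in\mathbb{C}^{n\times n\times n\times n}$ with $\|T\|_F=1$, and let $M=n^2\max_{i,j,k,l}|T_{ijkl}|$. Let $\mathrm{OPT}_T=\max_{\vec x,\vec y,\vec u,\vec v\in\mathbb{C}^n\setminus\{0\}}\frac{|\langle T,\vec x\otimes\vec y\otimes\vec u\otimes\vec v\rangle|}{\|\vec x\|_2\|\vec y\|_2\|\vec u\|_2\|\vec v\|_2}$, let $|\psi_T\rangle=\sum_{i,j,k,l\in[n]}T_{ijkl}|e_i\rangle\otimes|e_j\rangle\otimes|e_k\rangle\otimes|e_l\rangle$ (a $4n$-qubit state), and let $\mathrm{OPT}_{\psi}=\max|\langle\sigma|\psi_T\rangle|$ over all $4n$-qubit pure product states $|\sigma\rangle=|\sigma_1\rangle\otimes\cdots\otimes|\sigma_{4n}\rangle$. Then \[ e^{-2}\mathrm{OPT}_T-\frac{10M}{n^{0.2}}\le\mathrm{OPT}_{\psi}\le e^{-2}\mathrm{OPT}_T+\frac{10}{n^{0.1}}+\frac{10M}{n^{0.2}}. \]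
   Context: $|e_i\rangle$ is the $n$-qubit computational basis state with $|1\rangle$ on qubit $i$ and $|0\rangle$ elsewhere. $\langle T,X\rangle=\sum_{ijkl}T_{ijkl}X_{ijkl}$, and $\|T\|_F$ is the Frobenius norm. *)

From HB Require Import structures.
From mathcomp Require Import all_boot all_order all_algebra.
From mathcomp Require Import complex.
From mathcomp Require Import boolp classical_sets reals sequences exp.
Set Implicit Arguments. Unset Strict Implicit. Unset Printing Implicit Defensive.
Import Order.TTheory GRing.Theory Num.Theory.
Local Open Scope ring_scope.

Section Defs.
Variable R : realType.
Local Notation C := (R[i]).

Definition cabs (z : C) : R := Num.sqrt ((complex.Re z) ^+ 2 + (complex.Im z) ^+ 2).

Definition vnorm2 n (x : 'I_n -> C) : R := Num.sqrt (\sum_i cabs (x i) ^+ 2).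

Definition tensor4 n := 'I_n -> 'I_n -> 'I_n -> 'I_n -> C.

Definition frob n (T : tensor4 n) : R :=
  Num.sqrt (\sum_i \sum_j \sum_k \sum_l cabs (T i j k l) ^+ 2).

Definition maxentry n (T : tensor4 n) : R :=
  \big[Num.max/0]_i \big[Num.max/0]_j \big[Num.max/0]_k \big[Num.max/0]_l
     cabs (T i j k l).

Definition tpair n (T : tensor4 n) (x y u v : 'I_n -> C) : C :=
  \sum_i \sum_j \sum_k \sum_l T i j k l * x i * y j * u k * v l.

Definition OPT_T n (T : tensor4 n) : R :=
  sup [set r : R | exists x y u v : 'I_n -> C,
        [/\ vnorm2 x != 0, vnorm2 y != 0, vnorm2 u != 0 & vnorm2 v != 0] /\
        r = cabs (tpair T x y u v) / (vnorm2 x * vnorm2 y * vnorm2 u * vnorm2 v)]%classic.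

(* Computational basis of 4n qubits: bitstrings b : 'I_(4n) -> bool
   (b q = true means qubit q is |1>).  Qubits are ordered blockwise: qubit
   q belongs to block q %/ n (0..3), position q %% n inside the block. *)
Definition bitstring n := {ffun 'I_(4 * n) -> bool}.

(* the basis string |e_i> (x) |e_j> (x) |e_k> (x) |e_l> *)
Definition basis4 n (i j k l : 'I_n) : bitstring n :=
  [ffun q : 'I_(4 * n) => (q %% n)%N == nth 0%N [:: val i; val j; val k; val l] (q %/ n)].

Definition psiT n (T : tensor4 n) (b : bitstring n) : C :=
  \sum_i \sum_j \sum_k \sum_l T i j k l * (b == basis4 i j k l)%:R.

(* a pure 4n-qubit product state: each factor sigma_q is a unit vector in C^2
   (amplitude of |0> is sigma q false, of |1> is sigma q true) *)
Definition unit_qubit (s : bool -> C) : Prop := cabs (s false) ^+ 2 + cabs (s true) ^+ 2 = 1.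

Definition overlap n (sigma : 'I_(4 * n) -> bool -> C) (psi : bitstring n -> C) : C :=
  \sum_(b : bitstring n) (\prod_q sigma q (b q))^* * psi b.

Definition OPT_psi n (T : tensor4 n) : R :=
  sup [set r : R | exists sigma : 'I_(4 * n) -> bool -> C,
        (forall q, unit_qubit (sigma q)) /\ r = cabs (overlap sigma (psiT T))]%classic.

End Defs.

(* Write [sigma] blockwise: [<sigma|psi_T> = <T, w_0 (x) w_1 (x) w_2 (x) w_3>],
   where [w_m i] is the conjugate amplitude of [|e_i>] in block [m], of modulus
   [b_i * prod_(r <> i) a_r] ([a_r], [b_r] the moduli of the amplitudes of qubit
   [r]).  Conversely, qubits proportional to [|0> + conj (z_r) |1>] for a unit
   vector [z] give [w = (prod_r (1 + |z_r|^2)^(-1/2)) z], a scalar at least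
   [e^(-1/2)]; this is the lower bound.  For the upper bound split each [w_m]
   into its light part (coordinates with [b_i^2 <= d]), of squared norm at most
   [e^(-1) / (1 - d)], and its heavy part, of l1-norm at most [2 / d].  By
   multilinearity the heavy parts cost at most [4 * maxentry T * (2 / d) * n^(3/2)],
   the light parts give at most [OPT_T (e^(-1) / (1 - d))^2], and [d = n^(-1/10)]. *)

From HB Require Import structures.
From mathcomp Require Import all_boot all_order all_algebra.
From mathcomp Require Import complex.
From mathcomp Require Import boolp classical_sets reals sequences exp.
From mathcomp Require Import ring lra.
Import Order.TTheory GRing.Theory Num.Theory.
Local Open Scope ring_scope.
Set Implicit Arguments. Unset Strict Implicit. Unset Printing Implicit Defensive.

Section RealFieldInequalities.
Variable F : realFieldType.

Lemma mulr_le_AMGM (l a b : F) : 0 < l ->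
  a * b <= 2^-1 * l * a ^+ 2 + 2^-1 / l * b ^+ 2.
Proof.
move=> l_gt0; have := sqr_ge0 (l * a - b).
have lV : l * l^-1 = 1 by rewrite mulfV ?gt_eqF.
have lV_gt0 : 0 < l^-1 by rewrite invr_gt0.
have -> : 2^-1 / l * b ^+ 2 = 2^-1 * (l^-1 * b ^+ 2) by ring.
nra.
Qed.

Lemma sqr_addr_eq1_le1 (x y : F) : 0 <= x -> x ^+ 2 + y ^+ 2 = 1 -> x <= 1.
Proof. by move=> x_ge0 xy1; rewrite -ler_sqr ?nnegrE // expr1n -xy1 lerDl sqr_ge0. Qed.

Lemma prod_ord_recr_neq n (h : 'I_n.+1 -> F) (i : 'I_n) :
  \prod_(r | r != widen_ord (leqnSn n) i) h r =
  (\prod_(r < n | r != i) h (widen_ord (leqnSn n) r)) * h ord_max.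
Proof.
rewrite big_mkcond big_ord_recr /= [X in _ = X * _]big_mkcond.
by rewrite -val_eqE /= neq_ltn ltn_ord orbT.
Qed.

Lemma prod_ord_recr_neq_max n (h : 'I_n.+1 -> F) :
  \prod_(r | r != ord_max) h r = \prod_(r < n) h (widen_ord (leqnSn n) r).
Proof.
rewrite big_mkcond big_ord_recr /= eqxx mulr1 big_mkcond.
by apply: eq_bigr => r _; rewrite -val_eqE /= neq_ltn ltn_ord.
Qed.

Lemma at_most_one_success_le1 n (f : 'I_n -> F) : (forall r, 0 <= f r <= 1) ->
  \sum_i f i * \prod_(r | r != i) (1 - f r) + \prod_r (1 - f r) <= 1.
Proof.
elim: n f => [|n IH] f f01; first by rewrite !big_ord0 add0r.
pose g r := f (widen_ord (leqnSn n) r).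
have g01 r : 0 <= g r <= 1 by apply: f01.
have := IH g g01.
set A := \sum_i _; set P := \prod_r _ => AP_le1.
have P_ge0 : 0 <= P.
  by apply: prodr_ge0 => r _; case/andP: (g01 r); rewrite subr_ge0.
have A_ge0 : 0 <= A.
  apply: sumr_ge0 => i _; rewrite mulr_ge0 //; first by case/andP: (g01 i).
  by apply: prodr_ge0 => r _; case/andP: (g01 r); rewrite subr_ge0.
rewrite big_ord_recr /= prod_ord_recr_neq_max big_ord_recr /=.
under eq_bigr do rewrite prod_ord_recr_neq mulrA.
rewrite -big_distrl /= -/A -/P.
by case/andP: (f01 ord_max); nra.
Qed.

End RealFieldInequalities.

Section ExpInequalities.
Variable R : realType.

Lemma mulr_expRN_le (x : R) : x * expR (- x) <= expR (-1).
Proof.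
have := ler_wpM2r (expR_ge0 (- x)) (expR_ge1Dx (x - 1)).
by rewrite addrC subrK expRD mulrAC expRxMexpNx_1 mul1r.
Qed.

Lemma sqrt1D_le_expR (t : R) : Num.sqrt (1 + t) <= expR (t / 2).
Proof.
rewrite -[leRHS]ger0_norm ?expR_ge0 // -sqrtr_sqr -expRM_natl mulrC divfK ?pnatr_eq0 //.
exact/ler_wsqrtr/expR_ge1Dx.
Qed.

Lemma expRN1_le_half : expR (-1) <= 2^-1 :> R.
Proof.
have := expR_ge1Dx (1 : R); have := expRxMexpNx_1 (1 : R).
have := expR_gt0 (-1 : R); nra.
Qed.

(* Via [rho <= exp (-d/2)] and [x exp (-x) <= exp (-1)] at [x = k d / 2]. *)
Lemma exprn_pred_mulrn_le (rho d : R) k : 0 < d -> d <= 2^-1 -> 0 <= rho ->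
  rho ^+ 2 <= 1 - d -> rho ^+ k.-1 *+ k <= 2 / d.
Proof.
move=> d_gt0 d_le rho_ge0 rho2_le.
case: k => [|k] /=; first by rewrite mulr0n divr_ge0 // ltW.
pose e := expR (- (d / 2)).
have rho_le_e : rho <= e.
  rewrite -ler_sqr ?nnegrE ?expR_ge0 //.
  apply: (le_trans rho2_le); rewrite -expRM_natl.
  have -> : 2%:R * - (d / 2) = - d by field.
  exact: expR_ge1Dx.
have ek : e ^+ k = expR (- (k%:R * d / 2)).
  by rewrite -expRM_natl mulrN mulrA.
have rho_le1 : rho <= 1.
  by rewrite -ler_sqr ?nnegrE // expr1n; lra.
have krho_le : k%:R * rho ^+ k <= d^-1.
  apply: (@le_trans _ _ (k%:R * e ^+ k)).
    by rewrite ler_wpM2l ?ler0n // lerXn2r ?nnegrE ?expR_ge0.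
  have := mulr_expRN_le (k%:R * d / 2); rewrite -ek => h.
  have -> : k%:R * e ^+ k = 2 / d * (k%:R * d / 2 * e ^+ k) by field; rewrite gt_eqF.
  apply: (le_trans (ler_wpM2l _ (le_trans h expRN1_le_half))).
    by rewrite divr_ge0 // ltW.
  by have -> : 2 / d * 2^-1 = d^-1 by field; rewrite gt_eqF.
rewrite mulrS -[rho ^+ k *+ k]mulr_natl.
have rhok_le1 : rho ^+ k <= 1 by rewrite exprn_ile1.
apply: (le_trans (lerD rhok_le1 krho_le)).
have -> : 2 / d = d^-1 + d^-1 by field; rewrite gt_eqF.
by rewrite lerD2r invf_ge1 //; lra.
Qed.

Lemma light_sum_prod_le n (f : 'I_n -> R) (d : R) : (forall r, 0 <= f r <= 1) ->
  (1 - d) * \sum_(i | f i <= d) f i * \prod_(r | r != i) (1 - f r) <= expR (-1).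
Proof.
move=> f01; set P := \prod_r (1 - f r); set Q := \sum_r f r.
have f_ge0 i : 0 <= f i by case/andP: (f01 i).
have f_compl_ge0 i : 0 <= 1 - f i by case/andP: (f01 i); rewrite subr_ge0.
have P_ge0 : 0 <= P by apply: prodr_ge0.
have P_le : P <= expR (- Q).
  by rewrite -sumrN expR_sum; apply: ler_prod => r _; rewrite f_compl_ge0 expR_ge1Dx.
apply: (@le_trans _ _ (Q * P)); last first.
  exact: le_trans (ler_wpM2l (sumr_ge0 _ _) P_le) (mulr_expRN_le Q).
rewrite big_distrr /= (@le_trans _ _ (\sum_(i | f i <= d) f i * P)) //.
  apply: ler_sum => i fi_le; rewrite /P [X in _ <= _ * X](bigD1 i) //= mulrCA.
  by rewrite ler_wpM2l // ler_wpM2r ?prodr_ge0 // lerD2l lerN2.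
rewrite -big_distrl /= ler_wpM2r // /Q [leRHS](bigID (fun i => f i <= d)) /= lerDl.
exact: sumr_ge0.
Qed.

(* Every heavy index has [a r <= sqrt (1 - d)], so each of the [k] heavy
   terms is at most [sqrt (1 - d) ^ (k - 1)]. *)
Lemma heavy_sum_prod_le n (a b : 'I_n -> R) (d : R) :
  (forall r, 0 <= a r) -> (forall r, 0 <= b r) ->
  (forall r, a r ^+ 2 + b r ^+ 2 = 1) -> 0 < d -> d <= 2^-1 ->
  \sum_(i | d < b i ^+ 2) b i * \prod_(r | r != i) a r <= 2 / d.
Proof.
move=> a_ge0 b_ge0 ab1 d_gt0 d_le.
set B := [pred i | d < b i ^+ 2]; set rho := Num.sqrt (1 - d).
have a_le1 r : a r <= 1 := sqr_addr_eq1_le1 (a_ge0 r) (ab1 r).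
have b_le1 r : b r <= 1 by apply: sqr_addr_eq1_le1 (b_ge0 r) _; rewrite addrC.
have a_heavy_le r : r \in B -> a r <= rho.
  rewrite inE /= => heavy; rewrite -(ger0_norm (a_ge0 r)) -sqrtr_sqr.
  by apply: ler_wsqrtr; have := ab1 r; lra.
have term_le i : i \in B -> b i * \prod_(r | r != i) a r <= rho ^+ #|B|.-1.
  move=> Bi; rewrite (bigID (mem B)) /= mulrA.
  apply: le_trans (ler_piMr _ _) _.
  - by rewrite mulr_ge0 ?prodr_ge0.
  - by apply: prodr_ile1 => r _; rewrite a_ge0 a_le1.
  apply: le_trans (ler_piMl _ (b_le1 i)) _; first exact: prodr_ge0.
  rewrite (cardD1 i B) Bi /= -prodr_const.
  by apply: ler_prod => r /andP [_ Br]; rewrite a_ge0 a_heavy_le.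
apply: le_trans (ler_sum _ term_le) _.
rewrite sumr_const; apply: exprn_pred_mulrn_le; rewrite ?sqrtr_ge0 //.
by rewrite sqr_sqrtr //; lra.
Qed.

End ExpInequalities.

Section ComplexModulus.
Variable R : realType.
Local Notation C := R[i].

Lemma cabsE (z : C) : `|z| = (cabs z)%:C%C.
Proof. by rewrite normc_def. Qed.

Lemma cabs_ge0 (z : C) : 0 <= cabs z.
Proof. exact: sqrtr_ge0. Qed.

Lemma cabsM (z w : C) : cabs (z * w) = cabs z * cabs w.
Proof. by apply: complexI; rewrite rmorphM /= -!cabsE normrM. Qed.

Lemma cabsJ (z : C) : cabs z^* = cabs z.
Proof. by apply: complexI; rewrite -!cabsE norm_conjC. Qed.

Lemma cabsD (z w : C) : cabs (z + w) <= cabs z + cabs w.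
Proof. by rewrite -lecR rmorphD /= -!cabsE ler_normD. Qed.

Lemma cabsR (r : R) : cabs r%:C%C = `|r|.
Proof.
apply: complexI; rewrite -!cabsE.
have [r_ge0|r_lt0] := lerP 0 r; first by rewrite !ger0_norm ?ler0c.
by rewrite !ltr0_norm ?ltcR // rmorphN.
Qed.

Lemma conjC_realc (r : R) : (r%:C%C)^* = r%:C%C :> C.
Proof. exact: conjc_real. Qed.

Lemma cabs0 : cabs (0 : C) = 0.
Proof. by rewrite -[0 : C]/(0%:C%C) cabsR normr0. Qed.

Lemma cabs1 : cabs (1 : C) = 1.
Proof. by rewrite -[1 : C]/(1%:C%C) cabsR normr1. Qed.

Lemma cabs_sum (I : Type) (s : seq I) (P : pred I) (F : I -> C) :
  cabs (\sum_(i <- s | P i) F i) <= \sum_(i <- s | P i) cabs (F i).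
Proof.
elim/big_rec2: _ => [|i y x _ IH]; first by rewrite cabs0.
by apply: le_trans (cabsD _ _) _; rewrite lerD2l.
Qed.

Lemma cabs_prod (I : Type) (s : seq I) (P : pred I) (F : I -> C) :
  cabs (\prod_(i <- s | P i) F i) = \prod_(i <- s | P i) cabs (F i).
Proof. by elim/big_rec2: _ => [|i y x _ IH]; rewrite ?cabs1 // cabsM IH. Qed.

End ComplexModulus.

Section QuadrupleSums.
Variable n : nat.

Definition sum4 (V : nmodType) (F : 'I_n -> 'I_n -> 'I_n -> 'I_n -> V) : V :=
  \sum_i \sum_j \sum_k \sum_l F i j k l.

Lemma eq_sum4 (V : nmodType) (F G : 'I_n -> 'I_n -> 'I_n -> 'I_n -> V) :
  (forall i j k l, F i j k l = G i j k l) -> sum4 F = sum4 G.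
Proof.
move=> FG; apply: eq_bigr => i _; apply: eq_bigr => j _; apply: eq_bigr => k _.
by apply: eq_bigr => l _.
Qed.

Lemma sum4D (V : nmodType) (F G : 'I_n -> 'I_n -> 'I_n -> 'I_n -> V) :
  sum4 (fun i j k l => F i j k l + G i j k l) = sum4 F + sum4 G.
Proof.
rewrite -big_split; apply: eq_bigr => i _; rewrite -big_split.
apply: eq_bigr => j _; rewrite -big_split; apply: eq_bigr => k _.
by rewrite -big_split.
Qed.

Lemma mulr_sum4 (S : pzSemiRingType) (a : S) (F : 'I_n -> 'I_n -> 'I_n -> 'I_n -> S) :
  a * sum4 F = sum4 (fun i j k l => a * F i j k l).
Proof.
rewrite big_distrr; apply: eq_bigr => i _; rewrite big_distrr.
apply: eq_bigr => j _; rewrite big_distrr; apply: eq_bigr => k _.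
by rewrite big_distrr.
Qed.

Lemma sum4_prod (S : comPzSemiRingType) (f g h e : 'I_n -> S) :
  sum4 (fun i j k l => f i * g j * h k * e l) =
  (\sum_i f i) * (\sum_j g j) * (\sum_k h k) * (\sum_l e l).
Proof.
rewrite /sum4.
under eq_bigr do under eq_bigr do under eq_bigr do rewrite -big_distrr /=.
under eq_bigr do under eq_bigr do rewrite -big_distrl /=.
under eq_bigr do rewrite -big_distrl /=.
rewrite -big_distrl /=; congr (_ * _).
under eq_bigr do under eq_bigr do rewrite -big_distrr /=.
under eq_bigr do rewrite -big_distrl /=.
rewrite -big_distrl /=; congr (_ * _).
under eq_bigr do rewrite -big_distrr /=.
by rewrite -big_distrl.
Qed.

Lemma ler_sum4 (D : numDomainType) (F G : 'I_n -> 'I_n -> 'I_n -> 'I_n -> D) :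
  (forall i j k l, F i j k l <= G i j k l) -> sum4 F <= sum4 G.
Proof.
move=> FG; apply: ler_sum => i _; apply: ler_sum => j _; apply: ler_sum => k _.
by apply: ler_sum => l _.
Qed.

Lemma sum4_ge0 (D : numDomainType) (F : 'I_n -> 'I_n -> 'I_n -> 'I_n -> D) :
  (forall i j k l, 0 <= F i j k l) -> 0 <= sum4 F.
Proof.
move=> F_ge0; apply: sumr_ge0 => i _; apply: sumr_ge0 => j _.
by apply: sumr_ge0 => k _; apply: sumr_ge0 => l _.
Qed.

Lemma cabs_sum4 (R : realType) (F : 'I_n -> 'I_n -> 'I_n -> 'I_n -> R[i]) :
  cabs (sum4 F) <= sum4 (fun i j k l => cabs (F i j k l)).
Proof.
apply: le_trans (cabs_sum _ _ _) _; apply: ler_sum => i _.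
apply: le_trans (cabs_sum _ _ _) _; apply: ler_sum => j _.
apply: le_trans (cabs_sum _ _ _) _; apply: ler_sum => k _.
exact: cabs_sum.
Qed.

End QuadrupleSums.

Section Tensors.
Variable R : realType.
Local Notation C := R[i].

Definition norm1 n (x : 'I_n -> C) : R := \sum_i cabs (x i).

Definition sqnorm n (x : 'I_n -> C) : R := \sum_i cabs (x i) ^+ 2.

Lemma norm1_ge0 n (x : 'I_n -> C) : 0 <= norm1 x.
Proof. by apply: sumr_ge0 => i _; apply: cabs_ge0. Qed.

Lemma sqnorm_ge0 n (x : 'I_n -> C) : 0 <= sqnorm x.
Proof. by apply: sumr_ge0 => i _; apply: sqr_ge0. Qed.

Lemma vnorm2_ge0 n (x : 'I_n -> C) : 0 <= vnorm2 x.
Proof. exact: sqrtr_ge0. Qed.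

Lemma sqr_vnorm2 n (x : 'I_n -> C) : vnorm2 x ^+ 2 = sqnorm x.
Proof. by rewrite sqr_sqrtr ?sqnorm_ge0. Qed.

Lemma vnorm2_eq0 n (x : 'I_n -> C) : vnorm2 x = 0 -> norm1 x = 0.
Proof.
move=> x0; have : sqnorm x = 0 by rewrite -sqr_vnorm2 x0 expr0n.
move/(psumr_eq0P (fun i _ => sqr_ge0 (cabs (x i)))) => xi0.
by apply: big1 => i _; apply/eqP; rewrite -sqrf_eq0 xi0.
Qed.

(* Cauchy-Schwarz against the all-ones vector, via AM-GM. *)
Lemma norm1_le_sqrt n (x : 'I_n -> C) : sqnorm x <= 1 -> norm1 x <= Num.sqrt n%:R.
Proof.
case: n x => [|n] x x_le1; first by rewrite /norm1 big_ord0 sqrtr_ge0.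
set s := Num.sqrt n.+1%:R.
have s_gt0 : 0 < s by rewrite sqrtr_gt0 ltr0n.
have xi_le i : cabs (x i) <= 2^-1 * s^-1 * 1 ^+ 2 + 2^-1 / s^-1 * cabs (x i) ^+ 2.
  by rewrite -[leLHS]mul1r mulr_le_AMGM // invr_gt0.
apply: le_trans (ler_sum _ (fun i _ => xi_le i)) _.
rewrite big_split /= sumr_const card_ord -big_distrr /= -/(sqnorm x) invrK.
have -> : 2^-1 * s^-1 * 1 ^+ 2 *+ n.+1 = 2^-1 * s.
  by rewrite -mulr_natr -(sqr_sqrtr (ler0n R n.+1)) -/s; field; rewrite gt_eqF.
by nra.
Qed.

Lemma cabs_le_maxentry n (T : tensor4 R n) i j k l : cabs (T i j k l) <= maxentry T.
Proof.
apply: le_trans (le_bigmax _ _ i); apply: le_trans (le_bigmax _ _ j).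
by apply: le_trans (le_bigmax _ _ k); apply: le_bigmax.
Qed.

Lemma maxentry_ge0 n (T : tensor4 R n) : 0 <= maxentry T.
Proof. exact: bigmax_ge_id. Qed.

Lemma tpair_le_maxentry n (T : tensor4 R n) x y u v :
  cabs (tpair T x y u v) <= maxentry T * (norm1 x * norm1 y * norm1 u * norm1 v).
Proof.
apply: le_trans (cabs_sum4 _) _; rewrite -sum4_prod mulr_sum4.
apply: ler_sum4 => i j k l; rewrite !cabsM -!mulrA ler_wpM2r ?cabs_le_maxentry //.
by rewrite !mulr_ge0 ?cabs_ge0.
Qed.

Lemma tpairZ n (T : tensor4 R n) x y u v (a b c e : C) :
  tpair T (fun i => a * x i) (fun j => b * y j) (fun k => c * u k) (fun l => e * v l)
  = a * b * c * e * tpair T x y u v.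
Proof. by rewrite [RHS]mulr_sum4; apply: eq_sum4 => i j k l; ring. Qed.

Lemma tpair_telescope n (T : tensor4 R n) x y u v x' y' u' v' :
  tpair T x y u v = tpair T x' y' u' v' + tpair T (fun i => x i - x' i) y u v
    + tpair T x' (fun j => y j - y' j) u v + tpair T x' y' (fun k => u k - u' k) v
    + tpair T x' y' u' (fun l => v l - v' l).
Proof. by rewrite -!sum4D; apply: eq_sum4 => i j k l; ring. Qed.

Lemma frob1_sum4 n (T : tensor4 R n) : frob T = 1 ->
  sum4 (fun i j k l => cabs (T i j k l) ^+ 2) = 1.
Proof.
move=> T1; rewrite -(expr1n _ 2) -T1 sqr_sqrtr //.
by apply: sum4_ge0 => i j k l; apply: sqr_ge0.
Qed.

(* Cauchy-Schwarz, via AM-GM with the weight [vnorm2 x * ... * vnorm2 v]. *)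
Lemma tpair_le_vnorm2 n (T : tensor4 R n) x y u v : frob T = 1 ->
  cabs (tpair T x y u v) <= vnorm2 x * vnorm2 y * vnorm2 u * vnorm2 v.
Proof.
move=> T1; set N := vnorm2 x * _ * _ * _.
have [N0|N_neq0] := eqVneq N 0.
  apply: le_trans (tpair_le_maxentry _ _ _ _ _) _.
  rewrite N0; move/eqP: N0; rewrite /N !mulf_eq0 -!orbA.
  by case/or4P => /eqP/vnorm2_eq0 ->; rewrite ?(mulr0, mul0r).
have N_gt0 : 0 < N by rewrite lt0r N_neq0 !mulr_ge0 ?vnorm2_ge0.
apply: le_trans (cabs_sum4 _) _.
apply: (@le_trans _ _ (sum4 (fun i j k l => 2^-1 * N * cabs (T i j k l) ^+ 2 +
   2^-1 / N * (cabs (x i) ^+ 2 * cabs (y j) ^+ 2 * cabs (u k) ^+ 2 * cabs (v l) ^+ 2)))).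
  apply: ler_sum4 => i j k l; rewrite -!exprMn.
  have -> : cabs (T i j k l * x i * y j * u k * v l) =
      cabs (T i j k l) * (cabs (x i) * cabs (y j) * cabs (u k) * cabs (v l)).
    by rewrite !cabsM !mulrA.
  exact: mulr_le_AMGM.
rewrite sum4D -!mulr_sum4 frob1_sum4 // sum4_prod -!/(sqnorm _) -!sqr_vnorm2.
rewrite -!exprMn -/N.
by have -> : 2^-1 * N * 1 + 2^-1 / N * N ^+ 2 = N by field; rewrite gt_eqF.
Qed.

Definition tensor_ratios n (T : tensor4 R n) :=
  [set r : R | exists x y u v : 'I_n -> C,
  [/\ vnorm2 x != 0, vnorm2 y != 0, vnorm2 u != 0 & vnorm2 v != 0] /\
  r = cabs (tpair T x y u v) / (vnorm2 x * vnorm2 y * vnorm2 u * vnorm2 v)]%classic.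

Lemma tensor_ratios_neq0 n (T : tensor4 R n) :
  (0 < n)%N -> (tensor_ratios T !=set0)%classic.
Proof.
move=> n_gt0; pose one (i : 'I_n) : C := 1.
have one_neq0 : vnorm2 one != 0.
  rewrite sqrtr_eq0 -ltNge /sqnorm.
  by under eq_bigr do rewrite cabs1 expr1n; rewrite sumr_const card_ord ltr0n.
exists (cabs (tpair T one one one one) /
        (vnorm2 one * vnorm2 one * vnorm2 one * vnorm2 one)).
by exists one, one, one, one.
Qed.

Lemma tensor_ratios_ge0 n (T : tensor4 R n) r : tensor_ratios T r -> 0 <= r.
Proof.
by case=> x [y [u [v [_ ->]]]]; rewrite divr_ge0 ?cabs_ge0 ?mulr_ge0 ?vnorm2_ge0.
Qed.

Lemma tensor_ratios_le1 n (T : tensor4 R n) : frob T = 1 -> ubound (tensor_ratios T) 1.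
Proof.
move=> T1 r [x [y [u [v [[? ? ? ?] ->]]]]].
have N_gt0 : 0 < vnorm2 x * vnorm2 y * vnorm2 u * vnorm2 v.
  by rewrite !mulr_gt0 // lt0r ?vnorm2_ge0 andbT.
by rewrite ler_pdivrMr // mul1r tpair_le_vnorm2.
Qed.

Lemma has_sup_tensor_ratios n (T : tensor4 R n) : (0 < n)%N -> frob T = 1 ->
  has_sup (tensor_ratios T).
Proof.
by move=> n_gt0 T1; split; [exact: tensor_ratios_neq0 | exists 1; exact: tensor_ratios_le1].
Qed.

Lemma OPT_T_ge0 n (T : tensor4 R n) : (0 < n)%N -> frob T = 1 -> 0 <= OPT_T T.
Proof.
move=> n_gt0 T1; have [r Tr] := tensor_ratios_neq0 T n_gt0.
exact: le_trans (tensor_ratios_ge0 Tr)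
  (sup_upper_bound (has_sup_tensor_ratios n_gt0 T1) Tr).
Qed.

Lemma OPT_T_le1 n (T : tensor4 R n) : (0 < n)%N -> frob T = 1 -> OPT_T T <= 1.
Proof.
by move=> n_gt0 T1; apply: ge_sup; [exact: tensor_ratios_neq0 | exact: tensor_ratios_le1].
Qed.

Lemma tpair_le_OPT_T n (T : tensor4 R n) x y u v : (0 < n)%N -> frob T = 1 ->
  cabs (tpair T x y u v) <= OPT_T T * (vnorm2 x * vnorm2 y * vnorm2 u * vnorm2 v).
Proof.
move=> n_gt0 T1; set N := vnorm2 x * _ * _ * _.
have [N0|N_neq0] := eqVneq N 0.
  by rewrite N0 mulr0 -N0 tpair_le_vnorm2.
have N_gt0 : 0 < N by rewrite lt0r N_neq0 !mulr_ge0 ?vnorm2_ge0.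
rewrite -ler_pdivrMr //; apply: sup_upper_bound; first exact: has_sup_tensor_ratios.
exists x, y, u, v; split => //.
by move: N_neq0; rewrite !mulf_eq0 !negb_or -!andbA => /and4P.
Qed.

End Tensors.

Section ProductStates.
Variable R : realType.
Local Notation C := R[i].
Variable n : nat.

Lemma block_qubit_subproof (m : 'I_4) (r : 'I_n) : (m * n + r < 4 * n)%N.
Proof.
apply: leq_trans (_ : m.+1 * n <= 4 * n)%N; last by rewrite leq_mul2r ltn_ord orbT.
by rewrite mulSn [(n + _)%N]addnC ltn_add2l.
Qed.

Definition block_qubit (m : 'I_4) (r : 'I_n) : 'I_(4 * n) :=
  Ordinal (block_qubit_subproof m r).

Lemma block_qubit_div m r : (block_qubit m r %/ n)%N = m.
Proof. by rewrite /= divnMDl ?divn_small ?addn0 // (leq_ltn_trans _ (ltn_ord r)). Qed.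

Lemma block_qubit_mod m r : (block_qubit m r %% n)%N = r.
Proof. by rewrite /= modnMDl modn_small. Qed.

Lemma prod_block_qubits (n_gt0 : (0 < n)%N) (F : 'I_(4 * n) -> C) :
  \prod_q F q = \prod_(m < 4) \prod_(r < n) F (block_qubit m r).
Proof.
rewrite pair_big /= (reindex (fun p : 'I_4 * 'I_n => block_qubit p.1 p.2)) //.
have q_div (q : 'I_(4 * n)) : (q %/ n < 4)%N by rewrite ltn_divLR // mulnC ltn_ord.
have q_mod (q : 'I_(4 * n)) : (q %% n < n)%N by rewrite ltn_pmod.
apply: onW_bij; exists (fun q => (Ordinal (q_div q), Ordinal (q_mod q))).
  move=> [m r]; congr pair; apply: val_inj.
    exact: block_qubit_div.
  exact: block_qubit_mod.
by move=> q; apply: val_inj; rewrite /= -divn_eq.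
Qed.

Definition tpair_blocks (T : tensor4 R n) (w : 'I_4 -> 'I_n -> C) : C :=
  tpair T (w ord0) (w (lift ord0 ord0)) (w (lift ord0 (lift ord0 ord0)))
    (w (lift ord0 (lift ord0 (lift ord0 ord0)))).

(* The conjugate of the amplitude of [|e_i>] in block [m] of [sigma]. *)
Definition block_coef (sigma : 'I_(4 * n) -> bool -> C) (m : 'I_4) (i : 'I_n) : C :=
  (\prod_r sigma (block_qubit m r) (r == i))^*.

Lemma overlap_psiT_sum4 (sigma : 'I_(4 * n) -> bool -> C) (T : tensor4 R n) :
  overlap sigma (psiT T) =
  sum4 (fun i j k l => T i j k l * (\prod_q sigma q (basis4 i j k l q))^*).
Proof.
rewrite /overlap /psiT.
under eq_bigr do rewrite big_distrr /=.
under eq_bigr do under eq_bigr do rewrite big_distrr /=.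
under eq_bigr do under eq_bigr do under eq_bigr do rewrite big_distrr /=.
under eq_bigr do under eq_bigr do under eq_bigr do under eq_bigr do rewrite big_distrr /=.
rewrite exchange_big; apply: eq_bigr => i _; rewrite exchange_big.
apply: eq_bigr => j _; rewrite exchange_big; apply: eq_bigr => k _.
rewrite exchange_big; apply: eq_bigr => l _.
rewrite (bigD1 (basis4 i j k l)) //= eqxx (mulr1 (T i j k l)) [X in _ + X]big1.
  by rewrite addr0 mulrC.
by move=> b /negbTE ->; rewrite !mulr0.
Qed.

Lemma overlap_psiT (n_gt0 : (0 < n)%N) (sigma : 'I_(4 * n) -> bool -> C)
    (T : tensor4 R n) :
  overlap sigma (psiT T) = tpair_blocks T (block_coef sigma).
Proof.
rewrite overlap_psiT_sum4; apply: eq_sum4 => i j k l.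
rewrite (prod_block_qubits n_gt0) !big_ord_recl big_ord0 mulr1 !rmorphM /= !mulrA.
by congr (_ * _ * _ * _ * _); congr (_^*); apply: eq_bigr => r _;
  rewrite ffunE block_qubit_div block_qubit_mod.
Qed.

End ProductStates.

Lemma unit_qubit_le1 (R : realType) (s : bool -> R[i]) b :
  unit_qubit s -> cabs (s b) <= 1.
Proof.
rewrite /unit_qubit; case: b => s1; apply: sqr_addr_eq1_le1 (cabs_ge0 _) _.
  by rewrite addrC; exact: s1.
exact: s1.
Qed.

Section BlockCoefficients.
Variable R : realType.
Local Notation C := R[i].
Variable n : nat.
Variable sigma : 'I_(4 * n) -> bool -> C.
Hypothesis sigma_unit : forall q, unit_qubit (sigma q).
Variable m : 'I_4.

Let amp0 r := cabs (sigma (block_qubit m r) false).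
Let amp1 r := cabs (sigma (block_qubit m r) true).

Definition weight1 r := amp1 r ^+ 2.

Lemma weight1_01 r : 0 <= weight1 r <= 1.
Proof.
rewrite sqr_ge0 -(sigma_unit (block_qubit m r)) lerDr /=; exact: sqr_ge0.
Qed.

Lemma cabs_block_coef i :
  cabs (block_coef sigma m i) = amp1 i * \prod_(r | r != i) amp0 r.
Proof.
rewrite cabsJ cabs_prod (bigD1 i) //= eqxx; congr (_ * _).
by apply: eq_bigr => r /negbTE ->.
Qed.

Lemma sqr_cabs_block_coef i :
  cabs (block_coef sigma m i) ^+ 2 = weight1 i * \prod_(r | r != i) (1 - weight1 r).
Proof.
rewrite cabs_block_coef exprMn -prodrXl; congr (_ * _); apply: eq_bigr => r _.
by rewrite -(sigma_unit (block_qubit m r)) addrK.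
Qed.

Lemma sqnorm_block_coef : sqnorm (block_coef sigma m) <= 1.
Proof.
rewrite /sqnorm; under eq_bigr do rewrite sqr_cabs_block_coef.
apply: le_trans (at_most_one_success_le1 weight1_01); rewrite lerDl.
by apply: prodr_ge0 => r _; case/andP: (weight1_01 r); rewrite subr_ge0.
Qed.

Definition light_coef (d : R) i := if weight1 i <= d then block_coef sigma m i else 0.

Lemma sqnorm_light_coef_le1 d : sqnorm (light_coef d) <= 1.
Proof.
apply: le_trans sqnorm_block_coef; apply: ler_sum => i _; rewrite /light_coef.
by case: ifP => _; rewrite ?cabs0 ?expr0n ?sqr_ge0.
Qed.

Lemma sqnorm_light_coef d : 0 < d < 1 -> sqnorm (light_coef d) <= expR (-1) / (1 - d).
Proof.
case/andP=> d_gt0 d_lt1; rewrite ler_pdivlMr ?subr_gt0 // mulrC.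
apply: le_trans (light_sum_prod_le d weight1_01).
apply: ler_wpM2l; first by rewrite subr_ge0 ltW.
rewrite /sqnorm [leRHS]big_mkcond /=; apply: ler_sum => i _; rewrite /light_coef.
by case: ifP => _; rewrite ?sqr_cabs_block_coef // cabs0 expr0n.
Qed.

Lemma norm1_heavy_coef d : 0 < d -> d <= 2^-1 ->
  norm1 (fun i => block_coef sigma m i - light_coef d i) <= 2 / d.
Proof.
move=> d_gt0 d_le.
have ab1 r : amp0 r ^+ 2 + amp1 r ^+ 2 = 1 by exact: sigma_unit.
apply: le_trans (heavy_sum_prod_le _ _ ab1 d_gt0 d_le);
  [|by move=> r; apply: cabs_ge0 ..].
rewrite /norm1 (bigID (fun i => d < amp1 i ^+ 2)) /= [X in _ + X]big1 ?addr0.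
  apply: ler_sum => i heavy; rewrite /light_coef /weight1 [_ <= d]leNgt heavy /=.
  by rewrite subr0 cabs_block_coef.
by move=> i; rewrite -leNgt /light_coef /weight1 => ->; rewrite subrr cabs0.
Qed.

End BlockCoefficients.

Section LowerBound.
Variable R : realType.
Local Notation C := R[i].
Variable n : nat.
Hypothesis n_gt0 : (0 < n)%N.

Definition qubit_scale (z : 'I_n -> C) r : R := (Num.sqrt (1 + cabs (z r) ^+ 2))^-1.

Lemma qubit_scale_gt0 z r : 0 < qubit_scale z r.
Proof. by rewrite invr_gt0 sqrtr_gt0 ltr_pwDl ?sqr_ge0. Qed.

Lemma sqr_qubit_scale z r : qubit_scale z r ^+ 2 * (1 + cabs (z r) ^+ 2) = 1.
Proof.
have pos : 0 < 1 + cabs (z r) ^+ 2 by rewrite ltr_pwDl ?sqr_ge0.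
by rewrite exprVn sqr_sqrtr ?ltW // mulVf ?gt_eqF.
Qed.

Lemma prod_qubit_scale_ge z : sqnorm z = 1 -> expR (- 2^-1) <= \prod_r qubit_scale z r.
Proof.
move=> z1; have -> : - 2^-1 = \sum_r - (cabs (z r) ^+ 2 / 2) :> R.
  by rewrite sumrN -mulr_suml -/(sqnorm z) z1 mul1r.
rewrite expR_sum.
apply: ler_prod => r _; rewrite expR_ge0 expRN lef_pV2 ?posrE ?expR_gt0 //.
  exact: sqrt1D_le_expR.
by rewrite sqrtr_gt0 ltr_pwDl ?sqr_ge0.
Qed.

Variable z : nat -> 'I_n -> C.

(* The conjugate makes the block coefficients proportional to [z m]. *)
Definition product_state (q : 'I_(4 * n)) (b : bool) : C :=
  let zq := z (q %/ n) in let r := Ordinal (ltn_pmod q n_gt0) in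
  (qubit_scale zq r)%:C%C * (if b then (zq r)^* else 1).

Lemma product_state_block m r b : product_state (block_qubit m r) b =
  (qubit_scale (z m) r)%:C%C * (if b then (z m r)^* else 1).
Proof.
rewrite /product_state block_qubit_div; congr (_%:C%C * _).
  by congr qubit_scale; apply: val_inj; rewrite /= block_qubit_mod.
by have -> : Ordinal (ltn_pmod (block_qubit m r) n_gt0) = r
  by apply: val_inj; rewrite /= block_qubit_mod.
Qed.

Lemma product_state_unit q : unit_qubit (product_state q).
Proof.
rewrite /unit_qubit /product_state /= !cabsM cabsJ cabs1 cabsR mulr1.
rewrite ger0_norm ?ltW ?qubit_scale_gt0 // exprMn -[X in X + _]mulr1 -mulrDr.
exact: sqr_qubit_scale.
Qed.

Lemma block_coef_product_state m :
  block_coef product_state m = fun i => (\prod_r qubit_scale (z m) r)%:C%C * z m i.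
Proof.
apply: funext => i; rewrite /block_coef (bigD1 i) //= product_state_block eqxx.
rewrite (eq_bigr (fun r => (qubit_scale (z m) r)%:C%C)); last first.
  by move=> r /negbTE r_neq_i; rewrite product_state_block r_neq_i mulr1.
rewrite -rmorph_prod !rmorphM /= conjCK !conjC_realc mulrAC -rmorphM /=.
by rewrite [in RHS](bigD1 i).
Qed.

Lemma overlap_product_state_ge (T : tensor4 R n) :
  (forall m, (m < 4)%N -> sqnorm (z m) = 1) ->
  expR (-2) * cabs (tpair T (z 0) (z 1) (z 2) (z 3)) <=
  cabs (overlap product_state (psiT T)).
Proof.
move=> z1; rewrite overlap_psiT // /tpair_blocks !block_coef_product_state /=.
rewrite tpairZ cabsM -!rmorphM cabsR ger0_norm; last first.
  by rewrite !mulr_ge0 // prodr_ge0 // => r _; rewrite ltW ?qubit_scale_gt0.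
apply: ler_wpM2r; first exact: cabs_ge0.
have c_ge m : (m < 4)%N -> expR (- 2^-1) <= \prod_r qubit_scale (z m) r.
  by move=> m_lt4; apply: prod_qubit_scale_ge; apply: z1.
have e_ge0 : 0 <= expR (- 2^-1 : R) := expR_ge0 _.
have -> : expR (-2) = expR (- 2^-1) * expR (- 2^-1) * expR (- 2^-1) * expR (- 2^-1) :> R.
  by rewrite -!expRD; congr expR; field.
by rewrite !ler_pM ?mulr_ge0 ?c_ge.
Qed.

End LowerBound.

Section Bounds.
Variable R : realType.
Local Notation C := R[i].

Definition overlap_values n (T : tensor4 R n) := [set r : R |
  exists sigma : 'I_(4 * n) -> bool -> C,
    (forall q, unit_qubit (sigma q)) /\ r = cabs (overlap sigma (psiT T))]%classic.

Lemma overlap_values_neq0 n (T : tensor4 R n) : (overlap_values T !=set0)%classic.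
Proof.
pose ground (q : 'I_(4 * n)) (b : bool) : C := if b then 0 else 1.
exists (cabs (overlap ground (psiT T))), ground; split => // q.
by rewrite /unit_qubit /= cabs0 cabs1 expr0n expr1n addr0.
Qed.

Lemma overlap_values_ub n (T : tensor4 R n) :
  ubound (overlap_values T) (\sum_b cabs (psiT T b)).
Proof.
move=> r [sigma [sigma_unit ->]]; apply: le_trans (cabs_sum _ _ _) _.
apply: ler_sum => b _; rewrite cabsM cabsJ cabs_prod ler_piMl ?cabs_ge0 //.
by apply: prodr_ile1 => q _; rewrite cabs_ge0 unit_qubit_le1.
Qed.

Lemma overlap_le_OPT_psi n (T : tensor4 R n) sigma :
  (forall q, unit_qubit (sigma q)) -> cabs (overlap sigma (psiT T)) <= OPT_psi T.
Proof.
move=> sigma_unit; apply: sup_upper_bound; last by exists sigma.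
by split; [exact: overlap_values_neq0 | eexists; exact: overlap_values_ub].
Qed.

Definition normalize n (x : 'I_n -> C) i := ((vnorm2 x)^-1)%:C%C * x i.

Lemma sqnorm_normalize n (x : 'I_n -> C) : vnorm2 x != 0 -> sqnorm (normalize x) = 1.
Proof.
move=> x_neq0; rewrite /sqnorm /normalize.
under eq_bigr do rewrite cabsM cabsR exprMn.
rewrite -big_distrr /= -/(sqnorm x) -sqr_vnorm2 ger0_norm ?invr_ge0 ?vnorm2_ge0 //.
by rewrite exprVn mulVf // expf_eq0.
Qed.

Lemma tensor_ratio_le_OPT_psi n (T : tensor4 R n) r : (0 < n)%N ->
  tensor_ratios T r -> expR (-2) * r <= OPT_psi T.
Proof.
move=> n_gt0 [x [y [u [v [[x0 y0 u0 v0] ->]]]]].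
pose z k := normalize (nth x [:: x; y; u; v] k).
apply: le_trans (overlap_le_OPT_psi _ (product_state_unit n_gt0 z)).
apply: le_trans (overlap_product_state_ge _ _ _); last first.
  by case=> [|[|[|[|m]]]] //= _; apply: sqnorm_normalize.
rewrite /z /= /normalize tpairZ cabsM -!rmorphM cabsR ger0_norm; last first.
  by rewrite !mulr_ge0 ?invr_ge0 ?vnorm2_ge0.
by rewrite -!invfM [X in _ <= _ * X]mulrC.
Qed.

Lemma lower_bound n (T : tensor4 R n) : (0 < n)%N -> expR (-2) * OPT_T T <= OPT_psi T.
Proof.
move=> n_gt0; rewrite mulrC -ler_pdivlMr ?expR_gt0 //.
apply: ge_sup; first exact: tensor_ratios_neq0.
move=> r Tr; rewrite ler_pdivlMr ?expR_gt0 // mulrC.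
exact: tensor_ratio_le_OPT_psi.
Qed.

Lemma tpair_le_maxentry_norm1 n (T : tensor4 R n) x y u v (a b c e : R) :
  norm1 x <= a -> norm1 y <= b -> norm1 u <= c -> norm1 v <= e ->
  cabs (tpair T x y u v) <= maxentry T * (a * b * c * e).
Proof.
move=> xa yb uc ve; apply: le_trans (tpair_le_maxentry _ _ _ _ _) _.
by rewrite ler_wpM2l ?maxentry_ge0 // !ler_pM ?mulr_ge0 ?norm1_ge0.
Qed.

(* Multilinearity: replacing the four vectors one at a time. *)
Lemma tpair_blocks_perturb n (T : tensor4 R n) (w w' : 'I_4 -> 'I_n -> C) (s D : R) :
  (forall m, norm1 (w m) <= s) -> (forall m, norm1 (w' m) <= s) ->
  (forall m, norm1 (fun i => w m i - w' m i) <= D) ->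
  cabs (tpair_blocks T w) <= cabs (tpair_blocks T w') + 4 * (maxentry T * (D * s ^+ 3)).
Proof.
move=> ws w's wD; rewrite /tpair_blocks.
set i1 : 'I_4 := lift ord0 ord0; set i2 : 'I_4 := lift ord0 (lift ord0 ord0).
set i3 : 'I_4 := lift ord0 (lift ord0 (lift ord0 ord0)).
rewrite (tpair_telescope _ _ _ _ _ (w' ord0) (w' i1) (w' i2) (w' i3)).
set mu := maxentry T.
have -> : 4 * (mu * (D * s ^+ 3)) = mu * (D * s * s * s) + mu * (s * D * s * s)
    + mu * (s * s * D * s) + mu * (s * s * s * D) by ring.
rewrite !addrA.
do 4 (apply: (le_trans (cabsD _ _)); apply: lerD; last exact: tpair_le_maxentry_norm1).
exact: lexx.
Qed.

Lemma overlap_le_upper n (T : tensor4 R n) sigma (d : R) : (0 < n)%N -> frob T = 1 ->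
  (forall q, unit_qubit (sigma q)) -> 0 < d -> d <= 2^-1 ->
  cabs (overlap sigma (psiT T)) <= OPT_T T * (expR (-1) / (1 - d)) ^+ 2
    + 4 * (maxentry T * (2 / d * Num.sqrt n%:R ^+ 3)).
Proof.
move=> n_gt0 T1 sigma_unit d_gt0 d_le; rewrite overlap_psiT //.
apply: le_trans (@tpair_blocks_perturb _ T _ (fun m => light_coef sigma m d)
  (Num.sqrt n%:R) (2 / d) _ _ _) _.
- by move=> m; apply/norm1_le_sqrt/sqnorm_block_coef.
- by move=> m; apply/norm1_le_sqrt/sqnorm_light_coef_le1.
- by move=> m; apply: norm1_heavy_coef.
rewrite lerD2r; apply: le_trans (tpair_le_OPT_T _ _ _ _ n_gt0 T1) _.
apply: ler_wpM2l; first exact: OPT_T_ge0.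
set c := expR (-1) / (1 - d).
have c_ge0 : 0 <= c by rewrite divr_ge0 ?expR_ge0 //; lra.
have vnorm2_le m : vnorm2 (light_coef sigma m d) <= Num.sqrt c.
  by apply/ler_wsqrtr/sqnorm_light_coef => //; apply/andP; split; lra.
have -> : c ^+ 2 = Num.sqrt c * Num.sqrt c * Num.sqrt c * Num.sqrt c.
  by rewrite -[c in LHS]sqr_sqrtr //; ring.
by rewrite !ler_pM ?mulr_ge0 ?vnorm2_ge0.
Qed.

Lemma upper_bound n (T : tensor4 R n) (d : R) : (0 < n)%N -> frob T = 1 ->
  0 < d -> d <= 2^-1 ->
  OPT_psi T <= OPT_T T * (expR (-1) / (1 - d)) ^+ 2
    + 4 * (maxentry T * (2 / d * Num.sqrt n%:R ^+ 3)).
Proof.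
move=> n_gt0 T1 d_gt0 d_le; apply: ge_sup; first exact: overlap_values_neq0.
by move=> r [sigma [sigma_unit ->]]; apply: overlap_le_upper.
Qed.

End Bounds.

Section FinalEstimates.
Variable R : realType.

Lemma powR_tenth (x : R) : 0 <= x ->
  [/\ powR x (1 / 10) ^+ 10 = x, powR x (1 / 5) = powR x (1 / 10) ^+ 2
    & Num.sqrt x = powR x (1 / 10) ^+ 5].
Proof.
move=> x_ge0; have pow10 : powR x (1 / 10) ^+ 10 = x.
  by rewrite -powR_mulrn ?powR_ge0 // -powRrM mul1r mulVf ?pnatr_eq0 // powRr1.
split=> //.
  by rewrite -powR_mulrn ?powR_ge0 // -powRrM; congr powR; field.
rewrite -[x in LHS]pow10 -[10%N]/(5 * 2)%N exprM sqrtr_sqr.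
by rewrite ger0_norm ?exprn_ge0 ?powR_ge0.
Qed.

Lemma scaled_OPT_le (O d : R) : 0 <= O <= 1 -> 0 < d -> d <= 2^-1 ->
  O * (expR (-1) / (1 - d)) ^+ 2 <= expR (-2) * O + 10 * d.
Proof.
move=> /andP [O_ge0 O_le1] d_gt0 d_le.
have -> : (expR (-1) / (1 - d)) ^+ 2 = expR (-2) / (1 - d) ^+ 2.
  by rewrite expr_div_n -expRM_natl mulrN1.
set E := expR (-2 : R); have E_gt0 : 0 < E := expR_gt0 _.
have E_le1 : E <= 1 by rewrite expR_le1; lra.
have dd_gt0 : 0 < (1 - d) ^+ 2 by rewrite exprn_gt0 // subr_gt0; lra.
have E_le : E <= E / (1 - d) ^+ 2.
  by rewrite ler_pdivlMr // ler_piMr ?ltW // expr2; nra.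
have Ed_le : E / (1 - d) ^+ 2 <= E + 10 * d.
  have h1 : 0 <= d * (E * d) by apply: mulr_ge0; [lra | nra].
  have h2 : 0 <= d * (1 - E) by apply: mulr_ge0; lra.
  have h3 : 0 <= d * ((1 - d) ^+ 2 - 4^-1).
    by apply: mulr_ge0; [lra | rewrite subr_ge0 expr2; nra].
  by rewrite ler_pdivrMr // expr2; nra.
have : O * (E / (1 - d) ^+ 2 - E) <= E / (1 - d) ^+ 2 - E.
  by rewrite ler_piMl // subr_ge0.
lra.
Qed.

Lemma error_term_le (mu w : R) : 0 <= mu -> 2 <= w ->
  4 * (mu * (2 / w^-1 * (w ^+ 5) ^+ 3)) <= 10 * ((w ^+ 10) ^+ 2 * mu) / w ^+ 2.
Proof.
move=> mu_ge0 w_ge2; have w_gt0 : 0 < w by lra.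
have -> : 10 * ((w ^+ 10) ^+ 2 * mu) / w ^+ 2 = 10 * (mu * w ^+ 16) * (w * w).
  by field; rewrite gt_eqF.
have -> : 4 * (mu * (2 / w^-1 * (w ^+ 5) ^+ 3)) = 8 * (mu * w ^+ 16).
  by rewrite invrK; ring.
have : 0 <= mu * w ^+ 16 by rewrite mulr_ge0 // exprn_ge0 // ltW.
have : 4 <= w * w by nra.
nra.
Qed.

End FinalEstimates.

Theorem lemma7p5 (R : realType) :
  exists n0 : nat, forall n : nat, (n0 <= n)%N ->
  forall T : tensor4 R n, frob T = 1 ->
  let M := (n%:R) ^+ 2 * maxentry T in
  expR (-2) * OPT_T T - 10 * M / powR (n%:R) (1 / 5) <= OPT_psi T /\
  OPT_psi T <= expR (-2) * OPT_T T + 10 / powR (n%:R) (1 / 10)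
                + 10 * M / powR (n%:R) (1 / 5).
Proof.
exists 1024%N => n n_ge T T1 M.
have n_gt0 : (0 < n)%N by apply: leq_trans n_ge.
have [w10 w2 w5] := powR_tenth (ler0n R n); set w := powR _ (1 / 10) in w10 w2 w5 *.
have w_ge2 : 2 <= w.
  rewrite -(ler_pXn2r (isT : 0 < 10)%N) ?nnegrE ?powR_ge0 // w10.
  by rewrite -natrX ler_nat.
have M_ge0 : 0 <= M by apply: mulr_ge0; [exact: sqr_ge0 | exact: maxentry_ge0].
rewrite w2; split.
  apply: le_trans (lower_bound T n_gt0).
  rewrite lerBlDr lerDl; apply: divr_ge0; [exact: mulr_ge0 | exact: sqr_ge0].
have w_gt0 : 0 < w by lra.
apply: le_trans (@upper_bound _ _ T w^-1 n_gt0 T1 _ _) _.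
- by rewrite invr_gt0.
- by rewrite lef_pV2 ?posrE //; lra.
rewrite w5; apply: lerD.
  apply: scaled_OPT_le; rewrite ?invr_gt0 ?OPT_T_ge0 ?OPT_T_le1 //.
  by rewrite lef_pV2 ?posrE //; lra.
rewrite /M -w10; exact: error_term_le (maxentry_ge0 T) w_ge2.
Qed.
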